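(* Let $q\in\mathbb{C}$ with $|q|=1$, not a root of unity, with a fixed square root $q^{1/2}$. Let $\mathcal{A}=SL_q(2,\mathbb{R})$ be the Hopf $*$-algebra generated by self-adjoint $a,b,c,d$ with relations $ab=q\,ba$, $ac=q\,ca$, $bc=cb$, $bd=q\,db$, $cd=q\,dc$, $da-q^{-1}bc=1=ad-q\,bc$, comultiplication $\Delta(a)=a\otimes a+b\otimes c$, $\Delta(b)=a\otimes b+b\otimes d$, $\Delta(c)=c\otimes a+d\otimes c$, $\Delta(d)=c\otimes b+d\otimes d$, counit $\varepsilon(a)=\varepsilon(d)=1$, $\varepsilon(b)=\varepsilon(c)=0$, and antipode $S(a)=d$, $S(b)=-q^{-1}b$, $S(c)=-q\,c$, $S(d)=a$. Put $\tau=*\circ S$. For $\mu,\nu\in\mathbb{R}$ let $\mathcal{C}_{\mu\nu}$ be the linear span of $a-d+2q^{1/2}\mu\,b$ and $q\nu\,b+c$. Then $\mathcal{C}_{\mu\nu}$ is a $\tau$-invariant two-sided coideal of $\mathcal{A}$.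
   Context: A two-sided coideal $I$ is a subspace with $\varepsilon(I)=0$ and $\Delta(I)\subset I\otimes\mathcal{A}+\mathcal{A}\otimes I$; $\tau$-invariant means $\tau(I)\subset I$. *)

From HB Require Import structures.
From mathcomp Require Import all_boot all_order all_algebra complex.
From mathcomp Require Import reals Rstruct.
Set Implicit Arguments. Unset Strict Implicit. Unset Printing Implicit Defensive.
Import Order.TTheory GRing.Theory Num.Theory.
Local Open Scope ring_scope.

Notation RR := Rdefinitions.R.
Notation CC := (Rdefinitions.R)[i].

Definition rc (x : RR) : CC := real_complex RR x.

Definition is_linear (U V : lmodType CC) (f : U -> V) :=
  forall (k : CC) (x y : U), f (k *: x + y) = k *: f x + f y.

Definition is_alg_morph (A B : algType CC) (f : A -> B) :=
  [/\ is_linear f, f 1 = 1 & forall x y, f (x * y) = f x * f y].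

Definition SLq_rel (A : algType CC) (q : CC) (a b c d : A) :=
  [/\ a * b = q *: (b * a), a * c = q *: (c * a), b * c = c * b,
      b * d = q *: (d * b) &
      [/\ c * d = q *: (d * c), d * a - q^-1 *: (b * c) = 1
        & a * d - q *: (b * c) = 1]].

Definition presents_SLq (A : algType CC) (q : CC) (a b c d : A) :=
  SLq_rel q a b c d /\
  forall (B : algType CC) (x y z w : B), SLq_rel q x y z w ->
    (exists f : A -> B, is_alg_morph f /\ [/\ f a = x, f b = y, f c = z & f d = w]) /\
    (forall f g : A -> B, is_alg_morph f -> is_alg_morph g ->
       f a = g a -> f b = g b -> f c = g c -> f d = g d -> f =1 g).

Definition is_tensor_algebra (A AA : algType CC) (tens : A -> A -> AA) :=
  [/\ (forall x, is_linear (tens x)), (forall y, is_linear (tens^~ y)),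
      (forall x y x' y', tens x y * tens x' y' = tens (x * x') (y * y')),
      tens 1 1 = 1 &
      forall (V : lmodType CC) (g : A -> A -> V),
        (forall x, is_linear (g x)) -> (forall y, is_linear (g^~ y)) ->
        (exists h : AA -> V, is_linear h /\ forall x y, h (tens x y) = g x y) /\
        (forall h1 h2 : AA -> V, is_linear h1 -> is_linear h2 ->
           (forall x y, h1 (tens x y) = g x y) ->
           (forall x y, h2 (tens x y) = g x y) -> h1 =1 h2)].

Definition SLq_hopf_star (A AA : algType CC) (tens : A -> A -> AA) (q : CC)
    (a b c d : A) (Delta : A -> AA) (eps : A -> CC) (S star : A -> A) :=
  [/\
      is_alg_morph Delta /\
      [/\ Delta a = tens a a + tens b c, Delta b = tens a b + tens b d,
          Delta c = tens c a + tens d c & Delta d = tens c b + tens d d],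
      [/\ (forall (k : CC) x y, eps (k *: x + y) = k * eps x + eps y),
          eps 1 = 1, (forall x y, eps (x * y) = eps x * eps y) &
          [/\ eps a = 1, eps d = 1, eps b = 0 & eps c = 0]],
      [/\ is_linear S, S 1 = 1, (forall x y, S (x * y) = S y * S x) &
          [/\ S a = d, S b = - q^-1 *: b, S c = - q *: c & S d = a]] &
      [/\ (forall (k : CC) x y, star (k *: x + y) = Num.conj k *: star x + star y),
          (forall x y, star (x * y) = star y * star x),
          (forall x, star (star x) = x) &
          [/\ star a = a, star b = b, star c = c & star d = d]]].

(* the subspace I (x) A + A (x) I of A (x) A *)
Definition in_coideal_tens (A AA : algType CC) (tens : A -> A -> AA)
    (I : A -> Prop) (u : AA) :=
  exists n (xs ys : 'I_n -> A),
    (forall i, I (xs i) \/ I (ys i)) /\ u = \sum_(i < n) tens (xs i) (ys i).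

Definition is_subspace (A : lmodType CC) (I : A -> Prop) :=
  I 0 /\ forall (k : CC) x y, I x -> I y -> I (k *: x + y).

Definition two_sided_coideal (A AA : algType CC) (tens : A -> A -> AA)
    (Delta : A -> AA) (eps : A -> CC) (I : A -> Prop) :=
  [/\ is_subspace I, (forall x, I x -> eps x = 0) &
      forall x, I x -> in_coideal_tens tens I (Delta x)].

Definition tau_invariant (A : algType CC) (tau : A -> A) (I : A -> Prop) :=
  forall x, I x -> I (tau x).

Definition Cmunu (A : algType CC) (q q12 : CC) (mu nu : RR) (a b c d : A) : A -> Prop :=
  fun x => exists al be : CC,
    x = al *: (a - d + (2 * q12 * rc mu) *: b) + be *: ((q * rc nu) *: b + c).

From mathcomp Require Import all_boot all_order all_algebra complex.
From mathcomp Require Import reals Rstruct ring.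
Import GRing.Theory Num.Theory.
Set Implicit Arguments.
Unset Strict Implicit.
Unset Printing Implicit Defensive.
Local Open Scope ring_scope.

(* Both conditions are linear (τ antilinear), so it suffices to check them on
   the spanning vectors X := a - d + 2 q^{1/2} μ b and Y := q ν b + c.
   The counit kills both; by bilinearity of ⊗ their coproducts regroup as
     Δ X = X ⊗ a + d ⊗ X + m (X ⊗ b - b ⊗ X) + (b ⊗ Y - Y ⊗ b),
     Δ Y = Y ⊗ a + d ⊗ Y + r (X ⊗ b - b ⊗ X),
   with m = 2 q^{1/2} μ and r = q ν; and since |q| = 1 makes q̄ = q⁻¹,
   τ X = - X and τ Y = - q̄ Y. *)

Section Semilinear.
Variables (U V : lmodType CC) (s : {rmorphism CC -> CC}) (f : U -> V).
Hypothesis f_semilinear : forall k x y, f (k *: x + y) = s k *: f x + f y.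

Lemma semilinear0 : f 0 = 0.
Proof.
have := f_semilinear 1 0 0; rewrite rmorph1 !scale1r !addr0 => f00.
by apply: (@addrI _ (f 0)); rewrite addr0 -f00.
Qed.

Lemma semilinearD x y : f (x + y) = f x + f y.
Proof. by rewrite -[x in LHS]scale1r f_semilinear rmorph1 scale1r. Qed.

Lemma semilinearZ k x : f (k *: x) = s k *: f x.
Proof. by rewrite -[k *: x]addr0 f_semilinear semilinear0 addr0. Qed.

Lemma semilinearN x : f (- x) = - f x.
Proof. by rewrite -scaleN1r semilinearZ rmorphN1 scaleN1r. Qed.

Lemma semilinearB x y : f (x - y) = f x - f y.
Proof. by rewrite semilinearD semilinearN. Qed.

End Semilinear.

Section Subspace.
Variables (V : lmodType CC) (I : V -> Prop).
Hypothesis I_subspace : is_subspace I.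

Lemma subspaceZ k x : I x -> I (k *: x).
Proof. by case: I_subspace => I0 I_comb Ix; rewrite -[k *: x]addr0; exact: I_comb. Qed.

Lemma subspaceD x y : I x -> I y -> I (x + y).
Proof. by case: I_subspace => _ I_comb Ix Iy; rewrite -[x]scale1r; exact: I_comb. Qed.

Lemma subspaceB x y : I x -> I y -> I (x - y).
Proof. by case: I_subspace => _ I_comb Ix Iy; rewrite addrC -scaleN1r; exact: I_comb. Qed.

End Subspace.

Definition span2 (V : lmodType CC) (X Y : V) : V -> Prop :=
  fun x => exists al be : CC, x = al *: X + be *: Y.

Section Span2.
Variables (V : lmodType CC) (X Y : V).

Lemma span2_subspace : is_subspace (span2 X Y).
Proof.
split; first by exists 0, 0; rewrite !scale0r addr0.
move=> k _ _ [al [be ->]] [al' [be' ->]].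
exists (k * al + al'), (k * be + be').
by rewrite scalerDr !scalerA addrACA -!scalerDl.
Qed.

Lemma span2_l : span2 X Y X.
Proof. by exists 1, 0; rewrite scale1r scale0r addr0. Qed.

Lemma span2_r : span2 X Y Y.
Proof. by exists 0, 1; rewrite scale1r scale0r add0r. Qed.

Lemma span2_min (I : V -> Prop) :
  is_subspace I -> I X -> I Y -> forall x, span2 X Y x -> I x.
Proof.
move=> I_subspace IX IY _ [al [be ->]].
by apply: (subspaceD I_subspace); apply: (subspaceZ I_subspace).
Qed.

End Span2.

Lemma semilinear_preimage_subspace (U V : lmodType CC) (s : {rmorphism CC -> CC})
    (f : U -> V) (J : V -> Prop) :
  (forall k x y, f (k *: x + y) = s k *: f x + f y) ->
  is_subspace J -> is_subspace (fun x => J (f x)).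
Proof.
move=> f_semilinear [J0 J_comb]; split; first by rewrite (semilinear0 f_semilinear).
by move=> k x y Jx Jy; rewrite f_semilinear; apply: J_comb.
Qed.

Section TensorSubspace.
Variables (A AA : algType CC) (tens : A -> A -> AA).
Hypothesis tens_linear_l : forall y, is_linear (tens^~ y).
Variable I : A -> Prop.
Hypothesis I_subspace : is_subspace I.

Lemma in_coideal_tens_tens x y : I x \/ I y -> in_coideal_tens tens I (tens x y).
Proof. by move=> Ixy; exists 1%N, (fun=> x), (fun=> y); rewrite big_ord1. Qed.

Lemma in_coideal_tens_subspace : is_subspace (in_coideal_tens tens I).
Proof.
split; first by exists 0%N, (fun=> 0), (fun=> 0); split=> [[]|]; rewrite ?big_ord0.
move=> k _ _ [n [xs [ys [Ixys ->]]]] [n' [xs' [ys' [Ixys' ->]]]].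
pose zs i := match split i with inl j => k *: xs j | inr j => xs' j end.
pose ws i := match split i with inl j => ys j | inr j => ys' j end.
exists (n + n')%N, zs, ws; split.
  rewrite /zs /ws => i; case: (split i) => j //.
  by case: (Ixys j) => [Ix|]; [left; apply: subspaceZ | right].
rewrite big_split_ord scaler_sumr /zs /ws; congr (_ + _); apply: eq_bigr => i _.
  by rewrite (unsplitK (inl i : 'I_n + 'I_n')) (semilinearZ (s := idfun) (tens_linear_l _)).
by rewrite (unsplitK (inr i : 'I_n + 'I_n')).
Qed.

End TensorSubspace.

(* Proves [s = x + ?r] for a right-nested sum [s] having [x] as a summand. *)
Ltac pull_summand x :=
  lazymatch goal with
  | |- ?y + ?z = _ =>
      first [ unify y x; reflexivity
            | etransitivity;
              [ apply: (congr1 (fun t => y + t)); pull_summand x | exact: addrCA ] ]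
  | |- ?y = _ => unify y x; exact: esym (addr0 _)
  end.

Ltac cancel_opposites :=
  lazymatch goal with
  | |- 0 = 0 => reflexivity
  | |- - ?x + ?w = 0 =>
      etransitivity; [ apply: (congr1 (fun t => - x + t)); pull_summand x
                     | rewrite addKr; cancel_opposites ]
  | |- ?x + ?w = 0 =>
      etransitivity; [ apply: (congr1 (fun t => x + t)); pull_summand (- x)
                     | rewrite addNKr; cancel_opposites ]
  end.

Section BilinearRegrouping.
Variables (U V : lmodType CC) (B : U -> U -> V).
Hypotheses (B_linear_l : forall y, is_linear (B^~ y)) (B_linear_r : forall x, is_linear (B x)).
Variables (a b c d : U) (m r : CC).
Local Notation X := (a - d + m *: b).
Local Notation Y := (r *: b + c).

Let BDl x y z : B (x + y) z = B x z + B y z := semilinearD (s := idfun) (B_linear_l z) x y.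
Let BDr x y z : B z (x + y) = B z x + B z y := semilinearD (s := idfun) (B_linear_r z) x y.
Let BNl x z : B (- x) z = - B x z := semilinearN (s := idfun) (B_linear_l z) x.
Let BNr x z : B z (- x) = - B z x := semilinearN (s := idfun) (B_linear_r z) x.
Let BZl k x z : B (k *: x) z = k *: B x z := semilinearZ (s := idfun) (B_linear_l z) k x.
Let BZr k x z : B z (k *: x) = k *: B z x := semilinearZ (s := idfun) (B_linear_r z) k x.

Ltac expand_and_cancel :=
  apply/subr0_eq;
  rewrite !(BDl, BDr, BNl, BNr, BZl, BZr) ?(scalerDr, scalerN, scaleNr, scalerA, opprD, opprK);
  rewrite -?addrA; cancel_opposites.

Lemma bilinear_regroup_X :
  (B a a + B b c) - (B c b + B d d) + m *: (B a b + B b d) =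
  B X a + B d X + m *: (B X b - B b X) + (B b Y - B Y b).
Proof. expand_and_cancel. Qed.

Lemma bilinear_regroup_Y :
  r *: (B a b + B b d) + (B c a + B d c) = B Y a + B d Y + r *: (B X b - B b X).
Proof. expand_and_cancel. Qed.

End BilinearRegrouping.

Section Coproduct.
Variables (A AA : algType CC) (tens : A -> A -> AA) (Delta : A -> AA) (a b c d : A) (m r : CC).
Hypotheses (tens_linear_l : forall y, is_linear (tens^~ y))
           (tens_linear_r : forall x, is_linear (tens x)).
Hypotheses (Delta_linear : is_linear Delta)
           (Delta_a : Delta a = tens a a + tens b c) (Delta_b : Delta b = tens a b + tens b d)
           (Delta_c : Delta c = tens c a + tens d c) (Delta_d : Delta d = tens c b + tens d d).
Local Notation X := (a - d + m *: b).
Local Notation Y := (r *: b + c).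
Local Notation J := (in_coideal_tens tens (span2 X Y)).

Lemma coproduct_span2_in_coideal x : span2 X Y x -> J (Delta x).
Proof.
have J_subspace : is_subspace J := in_coideal_tens_subspace tens_linear_l (span2_subspace X Y).
have tensX y : J (tens X y) by apply: in_coideal_tens_tens; left; apply: span2_l.
have tensY y : J (tens Y y) by apply: in_coideal_tens_tens; left; apply: span2_r.
have tens_X y : J (tens y X) by apply: in_coideal_tens_tens; right; apply: span2_l.
have tens_Y y : J (tens y Y) by apply: in_coideal_tens_tens; right; apply: span2_r.
have DeltaD := semilinearD (s := idfun) Delta_linear.
have DeltaZ := semilinearZ (s := idfun) Delta_linear.
apply: (span2_min (I := fun x => J (Delta x)));
  [ exact: (semilinear_preimage_subspace (s := idfun) Delta_linear J_subspace)
  | rewrite DeltaD (semilinearB (s := idfun) Delta_linear) DeltaZ Delta_a Delta_b Delta_d;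
    rewrite (bilinear_regroup_X tens_linear_l tens_linear_r a b c d m r)
  | rewrite DeltaD DeltaZ Delta_b Delta_c;
    rewrite (bilinear_regroup_Y tens_linear_l tens_linear_r a b c d m r) ];
  by do ![apply: (subspaceB J_subspace) | apply: (subspaceD J_subspace)
         | apply: (subspaceZ J_subspace) | exact: tensX | exact: tens_X
         | exact: tensY | exact: tens_Y].
Qed.

End Coproduct.

Lemma counit_span2 (A : lmodType CC) (eps : A -> CC) (a b c d : A) (m r : CC) :
  (forall (k : CC) x y, eps (k *: x + y) = k * eps x + eps y) ->
  eps a = 1 -> eps d = 1 -> eps b = 0 -> eps c = 0 ->
  forall x, span2 (a - d + m *: b) (r *: b + c) x -> eps x = 0.
Proof.
move=> eps_linear eps_a eps_d eps_b eps_c.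
have eps_lin : is_linear (eps : A -> CC^o) := eps_linear.
have zero_subspace : is_subspace (fun z : CC^o => z = 0).
  by split=> // k _ _ -> ->; rewrite scaler0 addr0.
apply: (span2_min (I := fun x => eps x = 0));
  [ exact: (semilinear_preimage_subspace (s := idfun) eps_lin zero_subspace) | | ];
  by rewrite !(semilinearD (s := idfun) eps_lin, semilinearN (s := idfun) eps_lin,
              semilinearZ (s := idfun) eps_lin) ?eps_a ?eps_d eps_b ?eps_c ?subrr scaler0 addr0.
Qed.

Lemma conjC_norm1 (C : numClosedFieldType) (z : C) : `|z| = 1 -> z^* = z^-1.
Proof. by move=> z1; rewrite invC_norm z1 expr1n invr1 mul1r. Qed.

Lemma conj_rc (x : RR) : (rc x)^* = rc x.
Proof. exact: conjc_real. Qed.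

Section Tau.
Variables (q q12 : CC) (mu nu : RR) (A : lmodType CC) (a b c d : A) (S star : A -> A).
Hypotheses (q_norm : `|q| = 1) (q12_sq : q12 ^+ 2 = q).
Hypotheses (S_linear : is_linear S)
           (S_a : S a = d) (S_b : S b = - q^-1 *: b) (S_c : S c = - q *: c) (S_d : S d = a).
Hypotheses (star_semilinear : forall k x y, star (k *: x + y) = k^* *: star x + star y)
           (star_a : star a = a) (star_b : star b = b) (star_c : star c = c) (star_d : star d = d).
Local Notation X := (a - d + (2 * q12 * rc mu) *: b).
Local Notation Y := ((q * rc nu) *: b + c).
Local Notation tau x := (star (S x)).

Let tau_semilinear k x y : tau (k *: x + y) = k^* *: tau x + tau y.
Proof. by rewrite S_linear star_semilinear. Qed.

Let q12_norm : `|q12| = 1.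
Proof. by apply/eqP; rewrite -(sqrp_eq1 (normr_ge0 q12)) -normrX q12_sq q_norm. Qed.

Let q_neq0 : q != 0. Proof. by rewrite -normr_eq0 q_norm oner_eq0. Qed.
Let q12_neq0 : q12 != 0. Proof. by rewrite -normr_eq0 q12_norm oner_eq0. Qed.

Lemma tau_X : tau X = - X.
Proof.
rewrite (semilinearD (s := idfun) S_linear) (semilinearB (s := idfun) S_linear).
rewrite (semilinearZ (s := idfun) S_linear) S_a S_b S_d.
rewrite !(semilinearD star_semilinear, semilinearN star_semilinear, semilinearZ star_semilinear) /=.
rewrite star_a star_b star_d scalerA.
have -> : (2 * q12 * rc mu)^* * (- q^-1)^* = - (2 * q12 * rc mu).
  rewrite !rmorphM rmorphN fmorphV rmorph_nat /= conj_rc.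
  rewrite (conjC_norm1 q_norm) (conjC_norm1 q12_norm) invrK -q12_sq.
  by field.
by rewrite scaleNr opprD opprB.
Qed.

Lemma tau_Y : tau Y = - q^* *: Y.
Proof.
rewrite (semilinearD (s := idfun) S_linear) (semilinearZ (s := idfun) S_linear) S_b S_c.
rewrite !(semilinearD star_semilinear, semilinearZ star_semilinear) /=.
rewrite star_b star_c scalerA scalerDr scalerA.
congr (_ *: _ + _ *: _); last exact: rmorphN.
rewrite !rmorphM rmorphN fmorphV /= conj_rc (conjC_norm1 q_norm) invrK.
by field.
Qed.

Lemma tau_span2 x : span2 X Y x -> span2 X Y (tau x).
Proof.
have span_subspace := span2_subspace X Y.
apply: (span2_min (I := fun x => span2 X Y (tau x)));
  [ exact: (semilinear_preimage_subspace tau_semilinear span_subspace)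
  | rewrite tau_X -(scaleN1r X) | rewrite tau_Y ];
  by apply: (subspaceZ span_subspace); [exact: span2_l || exact: span2_r].
Qed.

End Tau.

Theorem proposition5 (q q12 : CC) (mu nu : RR)
    (A AA : algType CC) (tens : A -> A -> AA) (a b c d : A)
    (Delta : A -> AA) (eps : A -> CC) (S star : A -> A) :
  `|q| = 1 ->
  (forall n : nat, (0 < n)%N -> q ^+ n != 1) ->
  q12 ^+ 2 = q ->
  presents_SLq q a b c d ->
  is_tensor_algebra tens ->
  SLq_hopf_star tens q a b c d Delta eps S star ->
  two_sided_coideal tens Delta eps (Cmunu q q12 mu nu a b c d) /\
  tau_invariant (fun x => star (S x)) (Cmunu q q12 mu nu a b c d).
Proof.
move=> q_norm _ q12_sq _ [tens_linear_r tens_linear_l _ _ _].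
move=> [[[Delta_linear _ _] [Delta_a Delta_b Delta_c Delta_d]]
        [eps_linear _ _ [eps_a eps_d eps_b eps_c]]
        [S_linear _ _ [S_a S_b S_c S_d]]
        [star_semilinear _ _ [star_a star_b star_c star_d]]].
split; first split.
- exact: span2_subspace.
- exact: counit_span2 eps_linear eps_a eps_d eps_b eps_c.
- exact: coproduct_span2_in_coideal tens_linear_l tens_linear_r
    Delta_linear Delta_a Delta_b Delta_c Delta_d.
- exact: tau_span2 q_norm q12_sq S_linear S_a S_b S_c S_d
    star_semilinear star_a star_b star_c star_d.
Qed.
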